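(* Let $\mathcal{D}$ be either the free associative algebra $\mathbb{K}\langle d_1,d_2,\dots\rangle$ or the commutative polynomial algebra $\mathbb{K}[d_1,d_2,\dots]$, and let $B_n$ be the Bell polynomials in $\mathcal{D}$. Then $B_0=\mathbb{I}$ and, for all $n\ge0$, $$B_{n+1}=\sum_{k=0}^n\binom{n}{k}B_{n-k}\,d_{k+1}.$$
   Context: $\mathbb{I}$ denotes the unit (empty word) of $\mathcal{D}$. Let $\partial:\mathcal{D}\to\mathcal{D}$ be the linear derivation with $\partial(d_i)=d_{i+1}$, extended by the Leibniz rule $\partial(uv)=\partial(u)v+u\partial(v)$. The Bell polynomials are defined by $B_0=\mathbb{I}$ and $B_n=(d_1+\partial)B_{n-1}=d_1B_{n-1}+\partial(B_{n-1})$ for $n>0$. *)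

From HB Require Import structures.
From mathcomp Require Import all_boot all_order all_algebra.
From mathcomp.multinomials Require Import monalg.
Set Implicit Arguments. Unset Strict Implicit. Unset Printing Implicit Defensive.
Import GRing.Theory.
Local Open Scope ring_scope.

(* The algebra D is the monoid algebra {malg K[M]} over a monoid of monomials M:
   - M = {fmonom nat} (words in the letters) gives the free associative algebra
     K<d_1,d_2,...>;
   - M = {cmonom nat} (commutative monomials) gives K[d_1,d_2,...].
   The letter with index j : nat (i.e. the monomial fmu j, resp. ucm j) stands
   for the variable d_(j+1). *)

Definition dfree (K : fieldType) (j : nat) : {malg K[{fmonom nat}]} := << fmu j >>.
Definition dcomm (K : fieldType) (j : nat) : {malg K[{cmonom nat}]} := << ucm j >>.

Definition is_bell_derivation (K : fieldType) (M : monomType)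
    (d : nat -> {malg K[M]}) (D : {malg K[M]} -> {malg K[M]}) : Prop :=
  [/\ forall (a : K) (u v : {malg K[M]}), D (a *: u + v) = a *: D u + D v,
      forall j, D (d j) = d j.+1
    & forall u v : {malg K[M]}, D (u * v) = D u * v + u * D v].

Fixpoint bell (K : fieldType) (M : monomType) (d : nat -> {malg K[M]})
    (D : {malg K[M]} -> {malg K[M]}) (n : nat) : {malg K[M]} :=
  match n with
  | 0 => 1
  | n'.+1 => d 0 * bell d D n' + D (bell d D n')
  end.

From HB Require Import structures.
From mathcomp Require Import all_boot all_order all_algebra.
From mathcomp.multinomials Require Import monalg.
Set Implicit Arguments.
Unset Strict Implicit.
Unset Printing Implicit Defensive.
Import GRing.Theory.
Local Open Scope ring_scope.

(* Applying [D] to [B_(n+1) = sum_k C(n,k) B_(n-k) d_(k+1)] and adding [d_1 B_(n+1)]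
   gives, by the Leibniz rule, [sum_k C(n,k) (d_1 B_(n-k) + D B_(n-k)) d_(k+1)
   + sum_k C(n,k) B_(n-k) d_(k+2)]; the first bracket is [B_(n-k+1)], and Pascal's
   rule merges the two sums into the claimed formula for [B_(n+2)]. Only additivity
   of [D], the Leibniz rule and [D d_i = d_(i+1)] are used, in an arbitrary ring. *)

Lemma sum_pascal (V : nmodType) (n : nat) (G : nat -> nat -> V) :
  \sum_(k < n.+2) G (n.+1 - k)%N k *+ 'C(n.+1, k) =
  \sum_(k < n.+1) G (n.+1 - k)%N k *+ 'C(n, k)
    + \sum_(k < n.+1) G (n - k)%N k.+1 *+ 'C(n, k).
Proof.
rewrite big_ord_recl [in RHS]big_ord_recl !bin0 -addrA; congr (_ + _).
under eq_bigr => k _ do rewrite binS mulrnDr subSS.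
rewrite big_split /=; congr (_ + _).
rewrite big_ord_recr /= bin_small // mulr0n addr0.
by apply: eq_bigr => k _; rewrite subSS.
Qed.

Section Derivation.

Variables (R : pzRingType) (D : R -> R).
Hypotheses (DD : {morph D : u v / u + v})
           (DM : forall u v, D (u * v) = D u * v + u * D v).

Lemma derivation0 : D 0 = 0.
Proof. by apply: (addrI (D 0)); rewrite -DD !addr0. Qed.

Lemma derivation1 : D 1 = 0.
Proof.
by apply: (addrI (D 1)); have := DM 1 1; rewrite !mulr1 mul1r addr0 => <-.
Qed.

Lemma derivation_sum (I : Type) (r : seq I) (P : pred I) (F : I -> R) :
  D (\sum_(i <- r | P i) F i) = \sum_(i <- r | P i) D (F i).
Proof. exact: (big_morph D DD derivation0). Qed.

Lemma derivationMn (u : R) (m : nat) : D (u *+ m) = D u *+ m.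
Proof. by elim: m => [|m IH]; rewrite ?mulr0n ?derivation0 // !mulrS DD IH. Qed.

End Derivation.

Section BellRecurrence.

Variables (R : pzRingType) (d : nat -> R) (D : R -> R) (b : nat -> R).
Hypotheses (DD : {morph D : u v / u + v})
           (DM : forall u v, D (u * v) = D u * v + u * D v)
           (Dd : forall j, D (d j) = d j.+1)
           (b0 : b 0 = 1)
           (bS : forall n, b n.+1 = d 0 * b n + D (b n)).

Lemma bell_seq_binomial_rec (n : nat) :
  b n.+1 = \sum_(k < n.+1) (b (n - k)%N * d k) *+ 'C(n, k).
Proof.
elim: n => [|n IH].
  by rewrite bS b0 (derivation1 DM) big_ord1 mulr1 addr0 mul1r mulr1n.
rewrite bS IH (derivation_sum DD) mulr_sumr -big_split /=.
under eq_bigr => k _ do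
  rewrite (derivationMn DD) DM Dd mulrnAr -mulrnDl addrA mulrA -mulrDl -bS mulrnDl.
rewrite big_split /= (sum_pascal _ (fun i k => b i * d k)).
by congr (_ + _); apply: eq_bigr => k _; rewrite subSn // -ltnS.
Qed.

End BellRecurrence.

Lemma bell_binomial_rec (K : fieldType) (M : monomType) (d : nat -> {malg K[M]})
    (D : {malg K[M]} -> {malg K[M]}) :
  is_bell_derivation d D -> forall n : nat,
  bell d D n.+1 = \sum_(k < n.+1) (bell d D (n - k) * d k) *+ 'C(n, k).
Proof.
case=> Dlin Dd DM n.
have DD : {morph D : u v / u + v} by move=> u v; have := Dlin 1 u v; rewrite !scale1r.
exact: bell_seq_binomial_rec.
Qed.

Theorem mainTheorem4 (K : fieldType) :
  (forall D : {malg K[{fmonom nat}]} -> {malg K[{fmonom nat}]},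
     is_bell_derivation (dfree K) D ->
     bell (dfree K) D 0 = 1 /\
     forall n : nat,
       bell (dfree K) D n.+1 =
       \sum_(k < n.+1) (bell (dfree K) D (n - k) * dfree K k) *+ 'C(n, k))
  /\
  (forall D : {malg K[{cmonom nat}]} -> {malg K[{cmonom nat}]},
     is_bell_derivation (dcomm K) D ->
     bell (dcomm K) D 0 = 1 /\
     forall n : nat,
       bell (dcomm K) D n.+1 =
       \sum_(k < n.+1) (bell (dcomm K) D (n - k) * dcomm K k) *+ 'C(n, k)).
Proof. by split=> D /bell_binomial_rec rec; split. Qed.
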